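(* Let $W$ be an $\epsilon$-spectral cluster of $G_0$, let $V\subseteq V_0$ be closed in $G_0$ and dominate $W$, let $G=G_0|V$, and let $S\subseteq V$ be such that $S$ and $\overline S=V\setminus S$ are both closed in $G$ and $\overline S$ dominates $W$. Perform the big expansion of $S$ inside $G$ (a grab, then local improvements of $S$, then a grab, then local improvements of $S$), followed by local improvements of $\overline S$ (while there exists $v\in S$ with $d_G(v)>0$ and at least $\frac59 d_G(v)$ of its $G$-neighbors in $V\setminus S$, move $v$ from $S$ to $\overline S$). Then the final set $\overline S$ dominates $W$.
   Context: Standing setting: $G_0=(V_0,E_0)$ is a finite simple undirected graph and $0<\epsilon\le 1/2000000$. For a graph $H$, $d_H(v)$ is the degree, $\mathrm{vol}_H(S)=\sum_{v\in S}d_H(v)$, $E(S,T)$ is the set of edges with one endpoint in $S$ and the other in $T$, $\partial_H S=E(S,V(H)\setminus S)$. For $V\subseteq V_0$, $G_0|V$ is the induced subgraph. An $\epsilon$-spectral cluster of $G_0$ is $W\subseteq V_0$ with $\mathrm{vol}_{G_0}(W)>0$, $|\partial_{G_0}W|\le\epsilon\,\mathrm{vol}_{G_0}(W)$, and for every $A\subseteq W$ with $r=\mathrm{vol}_{G_0}(A)/\mathrm{vol}_{G_0}(W)$, $|E(A,W\setminus A)|\ge(r(1-r)-\epsilon)\mathrm{vol}_{G_0}(W)$. A set $A\subseteq V(H)$ is closed in $H$ if no $v\in V(H)\setminus A$ with $d_H(v)>0$ has at least $\frac59 d_H(v)$ of its $H$-neighbors in $A$. A set $A\subseteq V_0$ dominates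 $W$ if $\mathrm{vol}_{G_0}(W\cap A)>(1-3\epsilon)\mathrm{vol}_{G_0}(W)$. A grab of $S$ in $G$ replaces $S$ by $S\cup T$, where $T$ is the set of all $v\in V\setminus S$ with $d_G(v)>0$ having at least $\frac16 d_G(v)$ of their $G$-neighbors in $S$ (computed before the grab). Local improvements of $S$ in $G$: while there exists $v\in V\setminus S$ with $d_G(v)>0$ and at least $\frac59 d_G(v)$ of its $G$-neighbors in $S$, add $v$ to $S$. *)

(* A simple graph G0 is a symmetric irreflexive relation e on a
   finite vertex type T; V0 = [set: T]. An induced subgraph G0|V is represented
   by its vertex set V : {set T} (edges = e restricted to V). *)
From HB Require Import structures.
From mathcomp Require Import all_boot all_order all_algebra.
Set Implicit Arguments. Unset Strict Implicit. Unset Printing Implicit Defensive.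
Import Order.TTheory GRing.Theory Num.Theory.

Section Defs.
Variable T : finType.
Variable e : rel T.

Definition simple_graph := symmetric e /\ irreflexive e.

Definition deg (V : {set T}) (v : T) : nat := #|[set u in V | e v u]|.

Definition nbrs_in (V A : {set T}) (v : T) : nat := #|[set u in V :&: A | e v u]|.

Definition vol (V S : {set T}) : nat := \sum_(v in S) deg V v.

Definition vol0 (S : {set T}) : nat := vol [set: T] S.

(* |E(A,B)| in G0, for disjoint A, B: each edge counted once via (a,b), a in A, b in B *)
Definition ecut (A B : {set T}) : nat :=
  #|[set p : T * T | [&& p.1 \in A, p.2 \in B & e p.1 p.2]]|.

Definition spectral_cluster (R : realFieldType) (eps : R) (W : {set T}) : Prop :=
  [/\ (0 < vol0 W)%N,
      ((ecut W (~: W))%:R <= eps * (vol0 W)%:R)%R &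
      forall A : {set T}, A \subset W ->
        let r : R := ((vol0 A)%:R / (vol0 W)%:R)%R in
        ((r * (1 - r) - eps) * (vol0 W)%:R <= (ecut A (W :\: A))%:R)%R].

(* A closed in H = G0|V (A is assumed to be a subset of V) *)
Definition closed_in (V A : {set T}) : Prop :=
  forall v, v \in V -> v \notin A -> (0 < deg V v)%N ->
    ~ (5 * deg V v <= 9 * nbrs_in V A v)%N.

Definition dominates (R : realFieldType) (eps : R) (A W : {set T}) : Prop :=
  ((1 - 3 * eps) * (vol0 W)%:R < (vol0 (W :&: A))%:R)%R.

Definition grab (V S : {set T}) : {set T} :=
  S :|: [set v in V :\: S | (0 < deg V v)%N && (deg V v <= 6 * nbrs_in V S v)%N].

Definition li_step (V S S' : {set T}) : Prop :=
  exists v, [/\ v \in V :\: S, (0 < deg V v)%N,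
                (5 * deg V v <= 9 * nbrs_in V S v)%N & S' = v |: S].

Inductive li_star (V : {set T}) : {set T} -> {set T} -> Prop :=
| li_refl S : li_star V S S
| li_trans S S' S'' : li_step V S S' -> li_star V S' S'' -> li_star V S S''.

(* S' is a possible final result of running local improvements of S in G0|V
   (sequence of steps until no step applies) *)
Definition local_improve (V S S' : {set T}) : Prop :=
  li_star V S S' /\ closed_in V S'.

End Defs.

From HB Require Import structures.
From mathcomp Require Import all_boot all_order all_algebra.
From mathcomp Require Import zify lra.
Import Order.TTheory GRing.Theory Num.Theory.

Set Implicit Arguments. Unset Strict Implicit. Unset Printing Implicit Defensive.

(* Measured inside W, the big expansion can only grow S boundedly: a grab at
   most multiplies its volume by 7 and a run of local improvements by 10 (via
   the potential [wvol + 9 wcut - 9 wleak]), up to multiples of |∂W| and of the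
   volume of W outside V.  Hence W \ Sbar has volume O(eps vol W) <= vol W / 10.
   Closedness of Sbar in G, and of V in G0, makes every vertex of W \ Sbar
   send at most 5/9 of its degree into Sbar; such a small set with a sparse
   cut inside a spectral cluster must have volume < 3 eps vol W. *)

Lemma leq_sum_subset (T : finType) (A B : {set T}) (F : T -> nat) :
  A \subset B -> (\sum_(v in A) F v <= \sum_(v in B) F v)%N.
Proof.
by move=> AB; rewrite [leqRHS](big_setID A) /= (setIidPr AB) leq_addr.
Qed.

Lemma leq_sum_setU (T : finType) (A B : {set T}) (F : T -> nat) :
  (\sum_(v in A :|: B) F v <= \sum_(v in A) F v + \sum_(v in B) F v)%N.
Proof.
rewrite (big_setID A) /= setUK setDUl setDv set0U.
by rewrite leq_add2l leq_sum_subset ?subsetDl.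
Qed.

Section Degrees.
Variables (T : finType) (e : rel T).
Implicit Types (A B C V : {set T}) (v : T).

Lemma degE A v : deg e A v = (\sum_(u in A) e v u)%N.
Proof.
rewrite /deg -sum1_card big_mkcond [RHS]big_mkcond /=; apply: eq_bigr => u _.
by rewrite inE; case: (u \in A); case: (e v u).
Qed.

Lemma subset_leq_deg A B v : A \subset B -> (deg e A v <= deg e B v)%N.
Proof.
move=> AB; apply/subset_leq_card/subsetP=> u.
by rewrite !inE => /andP[/(subsetP AB) -> ->].
Qed.

Lemma deg_setID A B v : deg e A v = (deg e (A :&: B) v + deg e (A :\: B) v)%N.
Proof. by rewrite !degE (big_setID B). Qed.

Lemma leq_deg_setU A B v : (deg e (A :|: B) v <= deg e A v + deg e B v)%N.
Proof. by rewrite !degE leq_sum_setU. Qed.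

Lemma closed_in_deg V A v : A \subset V -> closed_in e V A ->
  v \in V -> v \notin A -> (9 * deg e A v <= 5 * deg e V v)%N.
Proof.
move=> AV clA vV vA; have degAV := subset_leq_deg v AV.
have [degV0|degVpos] := posnP (deg e V v); first by move: degAV; rewrite degV0; lia.
have := clA v vV vA degVpos.
by rewrite /nbrs_in -/(deg e (V :&: A) v) (setIidPr AV); lia.
Qed.

Lemma closed_in_setT_deg V A v : A \subset V ->
  closed_in e [set: T] V -> closed_in e V A -> v \notin A ->
  (9 * deg e A v <= 5 * deg e [set: T] v)%N.
Proof.
move=> AV clV clA vA; case: (boolP (v \in V)) => vV.
  have := closed_in_deg AV clA vV vA; have := subset_leq_deg v (subsetT V); lia.
have := closed_in_deg (subsetT V) clV (in_setT v) vV.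
have := subset_leq_deg v AV; lia.
Qed.

Definition edges A B : nat := \sum_(a in A) deg e B a.

Lemma ecut_edges A B : ecut e A B = edges A B.
Proof.
rewrite /ecut -sum1_card /edges; under [RHS]eq_bigr do rewrite degE.
rewrite pair_big /= big_mkcondr [RHS]big_mkcond [LHS]big_mkcond /=.
by apply: eq_bigr => p _; rewrite inE; case: (p.1 \in A); case: (p.2 \in B); case: (e _ _).
Qed.

Lemma subset_leq_edges A B C : B \subset C -> (edges A B <= edges A C)%N.
Proof. by move=> BC; apply: leq_sum => a _; apply: subset_leq_deg. Qed.

Lemma edges_setU1l A B a : a \notin A -> edges (a |: A) B = (deg e B a + edges A B)%N.
Proof. by move=> aA; rewrite /edges big_setU1. Qed.

Hypothesis esym : symmetric e.

Lemma edgesC A B : edges A B = edges B A.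
Proof.
rewrite /edges; under eq_bigr do rewrite degE; rewrite exchange_big /=.
by apply: eq_bigr => b _; rewrite degE; apply: eq_bigr => a _; rewrite esym.
Qed.

Lemma edges_setU1r A B b : b \notin B -> edges A (b |: B) = (edges A B + deg e A b)%N.
Proof. by move=> bB; rewrite edgesC edges_setU1l // edgesC addnC. Qed.

End Degrees.

Lemma li_star_subset (T : finType) (e : rel T) (V X Y : {set T}) :
  li_star e V X Y -> X \subset Y.
Proof.
elim=> [//|S S' S'' [v [_ _ _ ->]] _]; exact/subset_trans/subsetUr.
Qed.

Lemma li_star_subsetV (T : finType) (e : rel T) (V X Y : {set T}) :
  X \subset V -> li_star e V X Y -> Y \subset V.
Proof.
move=> XV li; elim: li XV => [//|S S' S'' [v [vVS _ _ ->]] _ IH] SV.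
by apply: IH; rewrite subUset sub1set SV andbT; case/setDP: vVS.
Qed.

Section Potential.
Variables (T : finType) (e : rel T) (V W : {set T}).
Hypothesis esym : symmetric e.
Implicit Types X Y : {set T}.

Definition wvol X : nat := \sum_(v in W :&: X) deg e V v.
Definition wcut X : nat := edges e (W :&: X) ((W :&: V) :\: X).
Definition wleak X : nat := edges e (W :&: X) (~: W).

Lemma leq_deg_setI_compl X v :
  (deg e (V :&: X) v <= deg e (W :&: X) v + deg e (~: W) v)%N.
Proof.
apply: leq_trans (leq_deg_setU _ _ _ _); apply: subset_leq_deg; apply/subsetP=> u.
by rewrite !inE; case: (u \in W); case: (u \in X); rewrite ?andbF.
Qed.

(* The potential [wvol + 9 wcut - 9 wleak] never increases: a vertex v of W
   joining X adds d_V(v) to [wvol] and changes [9 wcut] by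
   9 (d_{V\X}(v) - d_{W∩X}(v)) <= 9 d_{~W}(v) - 10 d_V(v),
   since 5 d_V(v) <= 9 d_{V∩X}(v). *)
Lemma li_step_potential X Y : li_step e V X Y ->
  (wvol Y + 9 * wcut Y + 9 * wleak X <= wvol X + 9 * wcut X + 9 * wleak Y)%N.
Proof.
case=> v [/setDP[vV vX] _ + ->].
rewrite /nbrs_in -/(deg e (V :&: X) v) => many_in.
have leq_out : (deg e ((W :&: V) :\: (v |: X)) v <= deg e (V :\: X) v)%N.
  apply: subset_leq_deg; apply/subsetP=> u; rewrite !inE.
  by case: (u \in W); case: (u == v); case: (u \in X); case: (u \in V).
have := deg_setID e V X v; have := leq_deg_setI_compl X v.
case vW: (v \in W).
- have WvX : W :&: (v |: X) = v |: (W :&: X).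
    by apply/setP=> u; rewrite !inE; case: (u =P v) => [->|]; rewrite ?vW.
  have vWX : v \notin W :&: X by rewrite inE (negbTE vX) andbF.
  have WVX : (W :&: V) :\: X = v |: ((W :&: V) :\: (v |: X)).
    apply/setP=> u; rewrite !inE.
    by case: (u =P v) => [->|]; rewrite ?vW ?vV ?(negbTE vX).
  have vWVX : v \notin (W :&: V) :\: (v |: X) by rewrite !inE eqxx.
  rewrite /wvol /wleak /wcut WvX big_setU1 //= !edges_setU1l // WVX edges_setU1r //.
  lia.
- have WvX : W :&: (v |: X) = W :&: X.
    by apply/setP=> u; rewrite !inE; case: (u =P v) => [->|]; rewrite ?vW.
  have WVvX : (W :&: V) :\: (v |: X) = (W :&: V) :\: X.
    apply/setP=> u; rewrite !inE.
    by case: (u =P v) => [->|]; rewrite ?eqxx ?vW /= ?andbF.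
  rewrite /wvol /wleak /wcut WvX WVvX; lia.
Qed.

Lemma li_star_potential X Y : li_star e V X Y ->
  (wvol Y + 9 * wcut Y + 9 * wleak X <= wvol X + 9 * wcut X + 9 * wleak Y)%N.
Proof.
elim=> [S|S S' S'' /li_step_potential]; lia.
Qed.

Lemma wvol_li_star X Y : li_star e V X Y ->
  (wvol Y <= 10 * wvol X + 9 * edges e W (~: W))%N.
Proof.
move/li_star_potential.
have wcut_wvol : (wcut X <= wvol X)%N.
  by apply: subset_leq_edges; apply/subsetP=> u; rewrite !inE => /and3P[].
have wleak_bound : (wleak Y <= edges e W (~: W))%N.
  exact: leq_sum_subset (subsetIl W Y).
lia.
Qed.

Lemma wvol_grab X : (wvol (grab e V X) <= 7 * wvol X + 6 * edges e W (~: W))%N.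
Proof.
rewrite /wvol /grab; set G := [set v in V :\: X | _].
have GV : G \subset V by apply/subsetP=> u; rewrite !inE => /andP[/andP[]].
rewrite setIUr; apply: leq_trans (leq_sum_setU _ _ _) _.
rewrite -/(wvol X) mulSn -addnA leq_add2l.
apply: (@leq_trans (\sum_(v in W :&: G) 6 * (deg e (W :&: X) v + deg e (~: W) v))).
  apply: leq_sum => v; rewrite !inE => /and3P[_ _ /andP[_]].
  by rewrite /nbrs_in -/(deg e (V :&: X) v); have := leq_deg_setI_compl X v; lia.
rewrite -big_distrr big_split /= -mulnDr leq_mul2l /=; apply: leq_add.
  rewrite -/(edges e (W :&: G) (W :&: X)) edgesC //.
  exact: subset_leq_edges (subset_trans (subsetIr W G) GV).
exact: leq_sum_subset (subsetIl W G).
Qed.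

Lemma wvol_le_vol0 X : (wvol X <= vol0 e (W :\: (V :\: X)))%N.
Proof.
apply: (@leq_trans (vol0 e (W :&: X))).
  by apply: leq_sum => v _; apply/subset_leq_deg/subsetT.
apply: leq_sum_subset; apply/subsetP=> u; rewrite !inE.
by case: (u \in W); case: (u \in X); rewrite ?andbF.
Qed.

Lemma vol0_setI_wvol X :
  (vol0 e (W :&: X) <= wvol X + vol0 e (W :\: V) + edges e W (~: W))%N.
Proof.
have -> : vol0 e (W :&: X) = (wvol X + \sum_(v in W :&: X) deg e (~: V) v)%N.
  rewrite /vol0 /vol /wvol -big_split /=; apply: eq_bigr => v _.
  by rewrite (deg_setID e [set: T] V v) setTI setTD.
rewrite -addnA leq_add2l; apply: leq_trans (leq_sum_subset _ (subsetIl W X)) _.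
apply: (@leq_trans (edges e W (W :\: V) + edges e W (~: W))).
  rewrite /edges -big_split /=; apply: leq_sum => v _.
  apply: leq_trans (leq_deg_setU _ _ _ _); apply: subset_leq_deg.
  by apply/subsetP=> u; rewrite !inE; case: (u \in W); case: (u \in V).
by rewrite leq_add2r edgesC //; apply: subset_leq_edges (subsetT W).
Qed.

(* 4900 = (7 * 10)^2: two grabs and two runs of local improvements. *)
Lemma vol0_big_expansion S S2 S4 Sbar :
  li_star e V (grab e V S) S2 -> li_star e V (grab e V S2) S4 ->
  li_star e V (V :\: S4) Sbar ->
  (vol0 e (W :\: Sbar) <= 2 * vol0 e (W :\: V) + 4900 * (wvol S + edges e W (~: W)))%N.
Proof.
move=> /wvol_li_star li1 /wvol_li_star li2 /li_star_subset S4Sbar.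
have : (vol0 e (W :\: Sbar) <= vol0 e (W :\: V) + vol0 e (W :&: S4))%N.
  apply: leq_trans (leq_sum_setU _ _ _); apply: leq_sum_subset.
  apply/subsetP=> u /setDP[uW uSbar]; rewrite !inE uW andbT orbC.
  case: (boolP (u \in S4)) => //= uS4; apply/negP=> uV; move/negP: uSbar; apply.
  by apply: (subsetP S4Sbar); rewrite inE uS4.
have := wvol_grab S; have := wvol_grab S2; have := vol0_setI_wvol S4; lia.
Qed.

End Potential.

Lemma closed_cut_bound (T : finType) (e : rel T) (W V Sbar : {set T}) :
  Sbar \subset V -> closed_in e [set: T] V -> closed_in e V Sbar ->
  (9 * ecut e (W :\: Sbar) (W :\: (W :\: Sbar)) <= 5 * vol0 e (W :\: Sbar))%N.
Proof.
move=> SbarV clV clSbar; rewrite ecut_edges /edges /vol0 /vol !big_distrr /=.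
apply: leq_sum => v /setDP[_ vSbar].
apply: leq_trans (closed_in_setT_deg SbarV clV clSbar vSbar).
rewrite leq_mul2l subset_leq_deg ?orbT //; apply/subsetP=> u.
by rewrite !inE; case: (u \in W); case: (u \in Sbar).
Qed.

Local Open Scope ring_scope.

Lemma dominatesE (R : realFieldType) (T : finType) (e : rel T) (eps : R) (A W : {set T}) :
  dominates e eps A W <-> (vol0 e (W :\: A))%:R < 3 * eps * (vol0 e W)%:R.
Proof.
have volW : vol0 e W = (vol0 e (W :&: A) + vol0 e (W :\: A))%N.
  by rewrite /vol0 /vol (big_setID A).
by rewrite /dominates volW natrD; split=> ?; lra.
Qed.

(* A spectral cluster has no small set with a sparse cut: [r (1 - r) - eps <= 5 r / 9]
   forces [r (4/9 - r) <= eps], hence [r < 3 eps] when [r <= 1/10]. *)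
Lemma spectral_cluster_sparse_small (R : realFieldType) (T : finType) (e : rel T)
    (eps : R) (W B : {set T}) :
  0 < eps -> spectral_cluster e eps W -> B \subset W ->
  (9 * ecut e B (W :\: B) <= 5 * vol0 e B)%N -> (10 * vol0 e B <= vol0 e W)%N ->
  (vol0 e B)%:R < 3 * eps * (vol0 e W)%:R.
Proof.
move=> eps0 [Wpos _ clusW] BW; have /= := clusW B BW.
rewrite -!(ler_nat R) !natrM; have : 0 < (vol0 e W)%:R :> R by rewrite ltr0n.
set w := (vol0 e W)%:R; set b := (vol0 e B)%:R; set c := (ecut e B _)%:R.
move=> wpos cut sparse small.
set r := b / w in cut.
have br : b = r * w by rewrite /r divfK // lt0r_neq0.
have r0 : 0 <= r by rewrite /r divr_ge0 // ltW.
rewrite br in sparse small *; clearbody r.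
have key : r * (4%:R / 9%:R - r) <= eps.
  have : (r * (4%:R / 9%:R - r) - eps) * w <= 0 by lra.
  by rewrite pmulr_lle0 // subr_le0.
have r_small : r <= 1 / 10%:R.
  have : (r - 1 / 10%:R) * w <= 0 by lra.
  by rewrite pmulr_lle0 // subr_le0.
by rewrite ltr_pM2r //; nra.
Qed.

Lemma small_loss_le_tenth (R : realFieldType) (eps : R) (w b x a c : nat) :
  eps <= 1 / 2000000%:R ->
  x%:R < 3 * eps * w%:R -> a%:R < 3 * eps * w%:R -> c%:R <= eps * w%:R ->
  (b <= 2 * x + 4900 * (a + c))%N -> (10 * b <= w)%N.
Proof.
move=> epsle xs ac cs bs; rewrite -[(10 * b <= w)%N](ler_nat R) natrM.
move: bs; rewrite -[(b <= _)%N](ler_nat R) natrD natrM natrM natrD => bs.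
have w0 := ler0n R w; have epsw := ler_wpM2r w0 epsle.
lra.
Qed.

Theorem mainTheorem10 (R : realFieldType) (T : finType) (e : rel T)
  (eps : R) (W V S S2 S4 Sbar : {set T}) :
  simple_graph e ->
  (0 < eps)%R -> (eps <= 1 / 2000000%:R)%R ->
  spectral_cluster e eps W ->
  closed_in e [set: T] V -> dominates e eps V W ->
  S \subset V ->
  closed_in e V S -> closed_in e V (V :\: S) -> dominates e eps (V :\: S) W ->
  local_improve e V (grab e V S) S2 ->
  local_improve e V (grab e V S2) S4 ->
  local_improve e V (V :\: S4) Sbar ->
  dominates e eps Sbar W.
Proof.
move=> [esym _] eps0 epsle clusW clV /dominatesE domV _ _ _ /dominatesE domSbar.
move=> [li1 _] [li2 _] [li3 clSbar].
have SbarV : Sbar \subset V := li_star_subsetV (subsetDl V S4) li3.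
apply/dominatesE; apply: (spectral_cluster_sparse_small eps0 clusW (subsetDl W Sbar)).
  exact: closed_cut_bound SbarV clV clSbar.
have [_ cutW _] := clusW; rewrite ecut_edges in cutW.
have wvolS : (wvol e V W S)%:R < 3 * eps * (vol0 e W)%:R.
  by apply: le_lt_trans domSbar; rewrite ler_nat wvol_le_vol0.
exact: small_loss_le_tenth epsle domV wvolS cutW (vol0_big_expansion W esym li1 li2 li3).
Qed.
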